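(* Let $H$, $K$ be torsion-free groups, let $H_0$ be a proper malnormal subgroup of $H$, and let $K_0$ be a proper subgroup of $K$ isomorphic to $H_0$. Then, for any amalgamated free product $G=H*_{H_0=K_0}K$ of $H$ and $K$ amalgamating $H_0$ with $K_0$ along any isomorphism between them, we have $\mathrm{Ord}_H(G)=\mathrm{Ord}_{K_0}(K)\cup\{0\}$.
   Context: None of the groups or subgroups is assumed finitely generated. A subgroup $A\leqslant B$ is malnormal if $A^b\cap A=\{1\}$ for all $b\in B\setminus A$. For a group $G$, a subset $S\subseteq G$ and $g\in G$, $\mathrm{Ord}_S(g)=\min\{k\geq 1: g^k\in S\}$ if such $k$ exists and $0$ otherwise; $\mathrm{Ord}_S(G)=\{\mathrm{Ord}_S(g):g\in G\}$ (so $\mathrm{Ord}_{K_0}(K)$ is the set of orders of elements of $K$ in $K_0$). *)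

From Stdlib Require Import Arith.

Record Group : Type := MkGroup {
  carrier :> Type;
  gmul : carrier -> carrier -> carrier;
  gone : carrier;
  ginv : carrier -> carrier;
  gmul_assoc : forall x y z, gmul x (gmul y z) = gmul (gmul x y) z;
  gmul_1l : forall x, gmul gone x = x;
  gmul_1r : forall x, gmul x gone = x;
  gmul_Vl : forall x, gmul (ginv x) x = gone;
  gmul_Vr : forall x, gmul x (ginv x) = gone
}.

Arguments gmul {g}.
Arguments gone {g}.
Arguments ginv {g}.

Fixpoint gpow {G : Group} (g : G) (n : nat) : G :=
  match n with
  | 0 => gone
  | S m => gmul g (gpow g m)
  end.

Definition torsion_free (G : Group) : Prop :=
  forall (g : G) (n : nat), 1 <= n -> gpow g n = gone -> g = gone.

Definition is_hom {G L : Group} (f : G -> L) : Prop :=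
  forall x y : G, f (gmul x y) = gmul (f x) (f y).

Definition is_subgroup {G : Group} (A : G -> Prop) : Prop :=
  A gone /\ (forall x y, A x -> A y -> A (gmul x y)) /\ (forall x, A x -> A (ginv x)).

Definition proper {G : Group} (A : G -> Prop) : Prop := exists g : G, ~ A g.

Definition conj {G : Group} (x b : G) : G := gmul (ginv b) (gmul x b).

Definition malnormal {G : Group} (A : G -> Prop) : Prop :=
  forall b : G, ~ A b -> forall x : G, A x -> A (conj x b) -> conj x b = gone.

Definition iso_between {H K : Group} (H0 : H -> Prop) (K0 : K -> Prop) (phi : H -> K) : Prop :=
  (forall x, H0 x -> K0 (phi x)) /\
  (forall x y, H0 x -> H0 y -> phi (gmul x y) = gmul (phi x) (phi y)) /\
  (forall x y, H0 x -> H0 y -> phi x = phi y -> x = y) /\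
  (forall y, K0 y -> exists x, H0 x /\ phi x = y).

(* (G, iH, iK) is an amalgamated free product H *_{H0 = K0} K along phi:
   the pushout in the category of groups (universal property). *)
Definition is_amalgam {H K : Group} (H0 : H -> Prop) (K0 : K -> Prop) (phi : H -> K)
  (G : Group) (iH : H -> G) (iK : K -> G) : Prop :=
  is_hom iH /\ is_hom iK /\
  (forall h, H0 h -> iH h = iK (phi h)) /\
  (forall (L : Group) (f : H -> L) (g : K -> L),
     is_hom f -> is_hom g -> (forall h, H0 h -> f h = g (phi h)) ->
     exists u : G -> L, is_hom u /\ (forall h, u (iH h) = f h) /\ (forall k, u (iK k) = g k) /\
       (forall v : G -> L, is_hom v -> (forall h, v (iH h) = f h) -> (forall k, v (iK k) = g k) ->
          forall x, v x = u x)).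

Definition OrdRel {G : Group} (S : G -> Prop) (g : G) (n : nat) : Prop :=
  (1 <= n /\ S (gpow g n) /\ (forall k, 1 <= k -> k < n -> ~ S (gpow g k)))
  \/ (n = 0 /\ forall k, 1 <= k -> ~ S (gpow g k)).

Definition OrdSet {G : Group} (S : G -> Prop) (n : nat) : Prop :=
  exists g : G, OrdRel S g n.

From Stdlib Require Import Arith Lia List Bool.
From Stdlib Require Import Classical ClassicalEpsilon FunctionalExtensionality
  PropExtensionality ProofIrrelevance.

(* Letting G act on the normal forms of the amalgam (van der Waerden's trick) shows that
   every element of G is in the image of H0 or is a reduced word, and that a reduced word
   lies in the image of H only when it is a single letter from H.  If g is neither in the
   image of H nor a conjugate h k h^-1 (h in H, k in K), cyclic reduction and induction on
   the length show that no power g^n (n >= 1) is such a single letter; the induction needs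
   that h^n and h k^n h^-1 (h not in H0, k not in K0) never fall into H0, which is where
   malnormality of H0 and torsion-freeness of H and K enter.  For g = h k h^-1 the powers
   of g meet the image of H exactly when the powers of k meet K0, so the nonzero values of
   Ord_H(G) are those of Ord_K0(K); the value 0 is attained by h k with h not in H0 and
   k not in K0. *)

Local Infix "**" := gmul (at level 40, left associativity).

Lemma sig_ext {T : Type} {P : T -> Prop} (u v : {x | P x}) :
  proj1_sig u = proj1_sig v -> u = v.
Proof. apply eq_sig_hprop. intros; apply proof_irrelevance. Qed.

Section GroupFacts.
Variable X : Group.
Implicit Types x y z w : X.

Lemma gmul_cancel_l x y z : x ** y = x ** z -> y = z.
Proof.
  intro E. rewrite <- (gmul_1l X y), <- (gmul_1l X z), <- (gmul_Vl X x).
  rewrite <- !gmul_assoc, E. reflexivity.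
Qed.

Lemma gmul_cancel_r x y z : y ** x = z ** x -> y = z.
Proof.
  intro E. rewrite <- (gmul_1r X y), <- (gmul_1r X z), <- (gmul_Vr X x).
  rewrite !gmul_assoc, E. reflexivity.
Qed.

Lemma ginv_unique x y : x ** y = gone -> y = ginv x.
Proof. intro E. apply (gmul_cancel_l x). rewrite E, gmul_Vr. reflexivity. Qed.

Lemma ginv_involutive x : ginv (ginv x) = x.
Proof. symmetry. apply ginv_unique, gmul_Vl. Qed.

Lemma ginv_gmul x y : ginv (x ** y) = ginv y ** ginv x.
Proof.
  symmetry. apply ginv_unique.
  rewrite <- gmul_assoc, (gmul_assoc _ y), gmul_Vr, gmul_1l, gmul_Vr. reflexivity.
Qed.

Lemma ginv_gone : ginv (gone : X) = gone.
Proof. symmetry. apply ginv_unique, gmul_1l. Qed.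

Lemma gpow_succ_r x n : gpow x (S n) = gpow x n ** x.
Proof.
  induction n as [|n IH]; simpl.
  - rewrite gmul_1l, gmul_1r. reflexivity.
  - simpl in IH. rewrite IH at 1. apply gmul_assoc.
Qed.

Lemma gpow_1 x : gpow x 1 = x.
Proof. apply gmul_1r. Qed.

Lemma gpow_conj x y n : gpow (x ** y ** ginv x) n = x ** gpow y n ** ginv x.
Proof.
  induction n as [|n IH]; simpl.
  - rewrite gmul_1r, gmul_Vr. reflexivity.
  - rewrite IH, !gmul_assoc, <- (gmul_assoc _ _ (ginv x) x), gmul_Vl, gmul_1r.
    reflexivity.
Qed.

Lemma gpow_rotate x w n : gpow (x ** w) (S n) = x ** (gpow (w ** x) n ** w).
Proof.
  induction n as [|n IH].
  - simpl. rewrite !gmul_1r, gmul_1l. reflexivity.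
  - change (gpow (x ** w) (S (S n))) with ((x ** w) ** gpow (x ** w) (S n)).
    rewrite IH. simpl. rewrite !gmul_assoc. reflexivity.
Qed.

Lemma gpow_comm x n : x ** gpow x n = gpow x n ** x.
Proof. apply gpow_succ_r. Qed.

End GroupFacts.

Section HomFacts.
Variables X Y : Group.
Variable f : X -> Y.
Hypothesis f_hom : is_hom f.

Lemma hom_gone : f gone = gone.
Proof. apply (gmul_cancel_l _ (f gone)). rewrite <- f_hom, !gmul_1r. reflexivity. Qed.

Lemma hom_ginv x : f (ginv x) = ginv (f x).
Proof. apply ginv_unique. rewrite <- f_hom, gmul_Vr. apply hom_gone. Qed.

Lemma hom_gpow x n : f (gpow x n) = gpow (f x) n.
Proof.
  induction n as [|n IH]; simpl.
  - apply hom_gone.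
  - rewrite f_hom, IH. reflexivity.
Qed.

End HomFacts.

Arguments hom_gone {X Y f}.
Arguments hom_ginv {X Y f} f_hom x.
Arguments hom_gpow {X Y f} f_hom x n.

Section SubgroupFacts.
Variable X : Group.
Variable A : X -> Prop.
Hypothesis A_sub : is_subgroup A.
Implicit Types x y : X.

Lemma subgroup_gone : A gone.
Proof. apply A_sub. Qed.

Lemma subgroup_gmul x y : A x -> A y -> A (x ** y).
Proof. apply A_sub. Qed.

Lemma subgroup_ginv x : A x -> A (ginv x).
Proof. apply A_sub. Qed.

Lemma subgroup_of_ginv x : A (ginv x) -> A x.
Proof. intro h. rewrite <- (ginv_involutive X x). apply subgroup_ginv, h. Qed.

Lemma subgroup_gmul_cancel_l x y : A x -> A (x ** y) -> A y.
Proof.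
  intros hx hxy. replace y with (ginv x ** (x ** y)).
  - apply subgroup_gmul; [apply subgroup_ginv|]; assumption.
  - rewrite gmul_assoc, gmul_Vl, gmul_1l. reflexivity.
Qed.

Lemma subgroup_gmul_cancel_r x y : A y -> A (x ** y) -> A x.
Proof.
  intros hy hxy. replace x with ((x ** y) ** ginv y).
  - apply subgroup_gmul; [|apply subgroup_ginv]; assumption.
  - rewrite <- gmul_assoc, gmul_Vr, gmul_1r. reflexivity.
Qed.

Definition subgroup_group : Group.
Proof.
  refine (MkGroup {x | A x}
    (fun a b => exist _ (proj1_sig a ** proj1_sig b)
                  (subgroup_gmul _ _ (proj2_sig a) (proj2_sig b)))
    (exist _ gone subgroup_gone)
    (fun a => exist _ (ginv (proj1_sig a)) (subgroup_ginv _ (proj2_sig a))) _ _ _ _ _);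
  intros; apply sig_ext; simpl; auto using gmul_assoc, gmul_1l, gmul_1r, gmul_Vl, gmul_Vr.
Defined.

End SubgroupFacts.

Arguments subgroup_gone {X A}.
Arguments subgroup_gmul {X A} A_sub {x y}.
Arguments subgroup_ginv {X A} A_sub {x}.
Arguments subgroup_of_ginv {X A} A_sub {x}.
Arguments subgroup_gmul_cancel_l {X A} A_sub {x y}.
Arguments subgroup_gmul_cancel_r {X A} A_sub {x y}.

Section Malnormal.
Variable X : Group.
Variable A : X -> Prop.
Hypotheses (A_sub : is_subgroup A) (A_mal : malnormal A).

Lemma malnormal_gpow_notin h n :
  torsion_free X -> ~ A h -> 1 <= n -> ~ A (gpow h n).
Proof.
  intros tf nh hn hpow. apply nh.
  assert (E : conj (gpow h n) h = gpow h n).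
  { unfold conj. rewrite <- gpow_comm, gmul_assoc, gmul_Vl, gmul_1l. reflexivity. }
  pose proof (A_mal h nh (gpow h n) hpow) as M. rewrite E in M.
  rewrite (tf h n hn (M hpow)). apply subgroup_gone, A_sub.
Qed.

Lemma malnormal_conj_notin h a :
  ~ A h -> A a -> a <> gone -> ~ A (h ** a ** ginv h).
Proof.
  intros nh ha na hc. apply na.
  assert (nh' : ~ A (ginv h)) by (intro c; apply nh, (subgroup_of_ginv A_sub), c).
  pose proof (A_mal (ginv h) nh' a ha) as M. unfold conj in M.
  rewrite ginv_involutive, gmul_assoc in M.
  apply (gmul_cancel_l _ h), (gmul_cancel_r _ (ginv h)).
  rewrite (M hc), gmul_1r, gmul_Vr. reflexivity.
Qed.

End Malnormal.

Arguments malnormal_gpow_notin {X A} A_sub A_mal h n.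
Arguments malnormal_conj_notin {X A} A_sub A_mal h a.

Lemma OrdRel_transfer (X Y : Group) (S : X -> Prop) (T : Y -> Prop) (x : X) (y : Y) n :
  (forall j, S (gpow x j) <-> T (gpow y j)) -> OrdRel S x n -> OrdRel T y n.
Proof.
  intros E [[hn [hS hmin]]|[hn hnone]].
  - left. repeat split; auto.
    + apply E, hS.
    + intros k hk hkn c. apply (hmin k hk hkn), E, c.
  - right. split; auto. intros k hk c. apply (hnone k hk), E, c.
Qed.

Section CosetRep.
Variable X : Group.
Variable A : X -> Prop.
Hypothesis A_sub : is_subgroup A.
Implicit Types a z : X.

Definition coset_rep z : X :=
  match excluded_middle_informative (A z) with
  | left _ => gone
  | right _ => epsilon (inhabits gone) (fun y => A (y ** ginv z))
  end.

Lemma coset_rep_spec z : A (z ** ginv (coset_rep z)).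
Proof.
  unfold coset_rep. destruct (excluded_middle_informative (A z)) as [h|h].
  - rewrite ginv_gone, gmul_1r. exact h.
  - assert (E : exists y, A (y ** ginv z)).
    { exists z. rewrite gmul_Vr. apply subgroup_gone, A_sub. }
    pose proof (subgroup_ginv A_sub (epsilon_spec (inhabits gone) _ E)) as S.
    rewrite ginv_gmul, ginv_involutive in S. exact S.
Qed.

Lemma coset_rep_gmul a z : A a -> coset_rep (a ** z) = coset_rep z.
Proof.
  intro ha. unfold coset_rep.
  destruct (excluded_middle_informative (A (a ** z))) as [h1|h1];
  destruct (excluded_middle_informative (A z)) as [h2|h2]; auto.
  - exfalso. apply h2, (subgroup_gmul_cancel_l A_sub ha h1).
  - exfalso. apply h1, (subgroup_gmul A_sub ha h2).
  - f_equal. apply functional_extensionality. intro y.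
    apply propositional_extensionality. rewrite ginv_gmul, gmul_assoc. split; intro h.
    + exact (subgroup_gmul_cancel_r A_sub (subgroup_ginv A_sub ha) h).
    + exact (subgroup_gmul A_sub h (subgroup_ginv A_sub ha)).
Qed.

Lemma coset_rep_in z : A z -> coset_rep z = gone.
Proof. intro h. unfold coset_rep. destruct (excluded_middle_informative (A z)); tauto. Qed.

Lemma coset_rep_idem z : coset_rep (coset_rep z) = coset_rep z.
Proof.
  assert (E : coset_rep z = ginv (z ** ginv (coset_rep z)) ** z).
  { rewrite ginv_gmul, ginv_involutive, <- gmul_assoc, gmul_Vl, gmul_1r. reflexivity. }
  rewrite E at 1. apply coset_rep_gmul, (subgroup_ginv A_sub), coset_rep_spec.
Qed.

Lemma coset_rep_notin z : ~ A z -> ~ A (coset_rep z).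
Proof.
  intros nz hz. apply nz.
  pose proof (coset_rep_spec z) as S.
  rewrite <- coset_rep_idem, (coset_rep_in _ hz), ginv_gone, gmul_1r in S. exact S.
Qed.

End CosetRep.

Arguments coset_rep_spec {X A} A_sub z.
Arguments coset_rep_gmul {X A} A_sub a z.
Arguments coset_rep_in {X A} z.
Arguments coset_rep_idem {X A} A_sub z.
Arguments coset_rep_notin {X A} A_sub z.

Section SymmetricGroup.
Variable T : Type.

Record perm : Type := Perm {
  perm_fun : T -> T;
  perm_invfun : T -> T;
  perm_funK : forall x, perm_fun (perm_invfun x) = x;
  perm_invfunK : forall x, perm_invfun (perm_fun x) = x }.

Lemma perm_ext (p q : perm) : (forall x, perm_fun p x = perm_fun q x) -> p = q.
Proof.
  intro E. destruct p as [f g fg gf], q as [f' g' fg' gf']; simpl in *.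
  assert (Ef : f = f') by (apply functional_extensionality; auto). subst f'.
  assert (Eg : g = g').
  { apply functional_extensionality. intro x. rewrite <- (fg' x) at 1. apply gf. }
  subst g'. f_equal; apply proof_irrelevance.
Qed.

Definition perm_mul (p q : perm) : perm.
Proof.
  refine (Perm (fun x => perm_fun p (perm_fun q x)) (fun x => perm_invfun q (perm_invfun p x)) _ _);
    intro x; rewrite ?perm_funK, ?perm_invfunK; reflexivity.
Defined.

Definition perm_one : perm := Perm (fun x => x) (fun x => x) (fun _ => eq_refl) (fun _ => eq_refl).

Definition perm_inverse (p : perm) : perm :=
  Perm (perm_invfun p) (perm_fun p) (perm_invfunK p) (perm_funK p).

Definition sym_group : Group.
Proof.
  refine (MkGroup perm perm_mul perm_one perm_inverse _ _ _ _ _);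
    intros; apply perm_ext; intros; simpl; auto using perm_funK, perm_invfunK.
Defined.

End SymmetricGroup.

Arguments perm_fun {T}.

Section NormalForms.
Variables (H K : Group) (H0 : H -> Prop) (K0 : K -> Prop) (phi : H -> K).
Hypotheses (H0_sub : is_subgroup H0) (K0_sub : is_subgroup K0)
  (phi_iso : iso_between H0 K0 phi).

Definition phi_inv (y : K) : H := epsilon (inhabits gone) (fun x => H0 x /\ phi x = y).

Lemma phi_inv_spec y : K0 y -> H0 (phi_inv y) /\ phi (phi_inv y) = y.
Proof. intro hy. unfold phi_inv. apply epsilon_spec, phi_iso, hy. Qed.

Lemma phi_K0 a : H0 a -> K0 (phi a).
Proof. apply phi_iso. Qed.

Lemma phi_gmul a b : H0 a -> H0 b -> phi (a ** b) = phi a ** phi b.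
Proof. apply phi_iso. Qed.

Lemma phi_invK a : H0 a -> phi_inv (phi a) = a.
Proof.
  intro ha. destruct (phi_inv_spec (phi a) (phi_K0 a ha)) as [h1 h2].
  apply phi_iso; assumption.
Qed.

Lemma phi_gone : phi gone = gone.
Proof.
  pose proof (subgroup_gone H0_sub) as h1.
  apply (gmul_cancel_l _ (phi gone)). rewrite <- phi_gmul, !gmul_1r; auto.
Qed.

Local Notation repH := (coset_rep H H0).
Local Notation repK := (coset_rep K K0).

Definition head_side (l : list (H + K)) : option bool :=
  match l with inl _ :: _ => Some true | inr _ :: _ => Some false | nil => None end.

Fixpoint nf_word (l : list (H + K)) : Prop :=
  match l with
  | nil => True
  | inl s :: t => repH s = s /\ ~ H0 s /\ head_side t <> Some true /\ nf_word t
  | inr s :: t => repK s = s /\ ~ K0 s /\ head_side t <> Some false /\ nf_word t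
  end.

(* [(a, [s1; ...; sn])] stands for [a s1 ... sn], with [a] in [H0] and the [si]
   alternating nontrivial coset representatives: the normal forms of the amalgam. *)
Definition normal_form (p : H * list (H + K)) : Prop := H0 (fst p) /\ nf_word (snd p).

Definition H_head (p : H * list (H + K)) : H :=
  match snd p with inl s :: _ => fst p ** s | _ => fst p end.
Definition H_rest (l : list (H + K)) : list (H + K) :=
  match l with inl _ :: t => t | _ => l end.
Definition H_split (z : H) (t : list (H + K)) : H * list (H + K) :=
  match excluded_middle_informative (H0 z) with
  | left _ => (z, t)
  | right _ => (z ** ginv (repH z), inl (repH z) :: t)
  end.

Definition K_head (p : H * list (H + K)) : K :=
  match snd p with inr s :: _ => phi (fst p) ** s | _ => phi (fst p) end.
Definition K_rest (l : list (H + K)) : list (H + K) :=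
  match l with inr _ :: t => t | _ => l end.
Definition K_split (z : K) (t : list (H + K)) : H * list (H + K) :=
  match excluded_middle_informative (K0 z) with
  | left _ => (phi_inv z, t)
  | right _ => (phi_inv (z ** ginv (repK z)), inr (repK z) :: t)
  end.

Lemma H_split_nf z t : nf_word t -> head_side t <> Some true -> normal_form (H_split z t).
Proof.
  intros ht st. unfold H_split, normal_form.
  destruct (excluded_middle_informative (H0 z)) as [hz|hz]; simpl; auto.
  repeat split; auto.
  - apply coset_rep_spec, H0_sub.
  - apply coset_rep_idem, H0_sub.
  - apply coset_rep_notin; assumption.
Qed.

Lemma K_split_nf z t : nf_word t -> head_side t <> Some false -> normal_form (K_split z t).
Proof.
  intros ht st. unfold K_split, normal_form.
  destruct (excluded_middle_informative (K0 z)) as [hz|hz]; simpl.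
  - split; auto. apply phi_inv_spec, hz.
  - repeat split; auto.
    + apply phi_inv_spec, coset_rep_spec, K0_sub.
    + apply coset_rep_idem, K0_sub.
    + apply coset_rep_notin; assumption.
Qed.

Lemma H_rest_nf l : nf_word l -> nf_word (H_rest l) /\ head_side (H_rest l) <> Some true.
Proof. destruct l as [|[s|s] t]; simpl; intuition discriminate. Qed.

Lemma K_rest_nf l : nf_word l -> nf_word (K_rest l) /\ head_side (K_rest l) <> Some false.
Proof. destruct l as [|[s|s] t]; simpl; intuition discriminate. Qed.

Lemma H_head_split z t : head_side t <> Some true -> H_head (H_split z t) = z.
Proof.
  intro st. unfold H_split, H_head.
  destruct (excluded_middle_informative (H0 z)); simpl.
  - destruct t as [|[s|s] t]; simpl in *; congruence.
  - rewrite <- gmul_assoc, gmul_Vl, gmul_1r. reflexivity.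
Qed.

Lemma K_head_split z t : head_side t <> Some false -> K_head (K_split z t) = z.
Proof.
  intro st. unfold K_split, K_head.
  destruct (excluded_middle_informative (K0 z)) as [hz|hz]; simpl.
  - destruct t as [|[s|s] t]; simpl in *; try congruence; apply phi_inv_spec, hz.
  - rewrite (proj2 (phi_inv_spec _ (coset_rep_spec K0_sub z))).
    rewrite <- gmul_assoc, gmul_Vl, gmul_1r. reflexivity.
Qed.

Lemma H_rest_split z t : head_side t <> Some true -> H_rest (snd (H_split z t)) = t.
Proof.
  intro st. unfold H_split.
  destruct (excluded_middle_informative (H0 z)); simpl; auto.
  destruct t as [|[s|s] t]; simpl in *; congruence.
Qed.

Lemma K_rest_split z t : head_side t <> Some false -> K_rest (snd (K_split z t)) = t.
Proof.
  intro st. unfold K_split.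
  destruct (excluded_middle_informative (K0 z)); simpl; auto.
  destruct t as [|[s|s] t]; simpl in *; congruence.
Qed.

Lemma H_split_head p : normal_form p -> H_split (H_head p) (H_rest (snd p)) = p.
Proof.
  destruct p as [a l]. intros [ha hl]. simpl in *. unfold H_head, H_split. simpl.
  destruct l as [|[s|s] t]; simpl in *.
  - destruct (excluded_middle_informative (H0 a)); tauto.
  - destruct hl as [rs [ns _]].
    destruct (excluded_middle_informative (H0 (a ** s))) as [h|h].
    + exfalso. apply ns, (subgroup_gmul_cancel_l H0_sub ha h).
    + rewrite coset_rep_gmul, rs, <- gmul_assoc, gmul_Vr, gmul_1r; auto.
  - destruct (excluded_middle_informative (H0 a)); tauto.
Qed.

Lemma K_split_head p : normal_form p -> K_split (K_head p) (K_rest (snd p)) = p.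
Proof.
  destruct p as [a l]. intros [ha hl]. simpl in *. unfold K_head, K_split. simpl.
  pose proof (phi_K0 a ha) as hpa.
  destruct l as [|[s|s] t]; simpl in *.
  - destruct (excluded_middle_informative (K0 (phi a))); [|tauto].
    rewrite phi_invK; auto.
  - destruct (excluded_middle_informative (K0 (phi a))); [|tauto].
    rewrite phi_invK; auto.
  - destruct hl as [rs [ns _]].
    destruct (excluded_middle_informative (K0 (phi a ** s))) as [h|h].
    + exfalso. apply ns, (subgroup_gmul_cancel_l K0_sub hpa h).
    + rewrite coset_rep_gmul, rs, <- gmul_assoc, gmul_Vr, gmul_1r, phi_invK; auto.
Qed.

Definition act_H (h : H) (p : H * list (H + K)) := H_split (h ** H_head p) (H_rest (snd p)).
Definition act_K (k : K) (p : H * list (H + K)) := K_split (k ** K_head p) (K_rest (snd p)).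

Lemma act_H_nf h p : normal_form p -> normal_form (act_H h p).
Proof. intros [_ hl]. destruct (H_rest_nf _ hl). apply H_split_nf; assumption. Qed.

Lemma act_K_nf k p : normal_form p -> normal_form (act_K k p).
Proof. intros [_ hl]. destruct (K_rest_nf _ hl). apply K_split_nf; assumption. Qed.

Lemma act_H_gmul h1 h2 p : normal_form p -> act_H (h1 ** h2) p = act_H h1 (act_H h2 p).
Proof.
  intros [_ hl]. destruct (H_rest_nf _ hl) as [_ st]. unfold act_H at 2 3.
  rewrite H_head_split, H_rest_split, gmul_assoc; auto.
Qed.

Lemma act_K_gmul k1 k2 p : normal_form p -> act_K (k1 ** k2) p = act_K k1 (act_K k2 p).
Proof.
  intros [_ hl]. destruct (K_rest_nf _ hl) as [_ st]. unfold act_K at 2 3.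
  rewrite K_head_split, K_rest_split, gmul_assoc; auto.
Qed.

Lemma act_H_gone p : normal_form p -> act_H gone p = p.
Proof. intro np. unfold act_H. rewrite gmul_1l. apply H_split_head, np. Qed.

Lemma act_K_gone p : normal_form p -> act_K gone p = p.
Proof. intro np. unfold act_K. rewrite gmul_1l. apply K_split_head, np. Qed.

Lemma act_H_K_agree a p : H0 a -> normal_form p -> act_H a p = act_K (phi a) p.
Proof.
  intros ha0. destruct p as [a1 l]. intros [ha1 hl]. simpl in *.
  unfold act_H, act_K, H_head, K_head, H_split, K_split. simpl.
  assert (hK : forall b, H0 b -> K0 (phi b)) by apply phi_K0.
  pose proof (subgroup_gmul H0_sub ha0 ha1) as h01.
  destruct l as [|[s|s] t]; simpl in *.
  - destruct (excluded_middle_informative (H0 (a ** a1))); [|tauto].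
    rewrite <- phi_gmul by assumption.
    destruct (excluded_middle_informative (K0 (phi (a ** a1)))); [|exfalso; auto].
    rewrite phi_invK; auto.
  - destruct hl as [rs [ns _]].
    destruct (excluded_middle_informative (H0 (a ** (a1 ** s)))) as [h|h].
    + exfalso. rewrite gmul_assoc in h. apply ns, (subgroup_gmul_cancel_l H0_sub h01 h).
    + rewrite gmul_assoc, coset_rep_gmul, rs, <- gmul_assoc, gmul_Vr, gmul_1r,
        <- phi_gmul by assumption.
      destruct (excluded_middle_informative (K0 (phi (a ** a1)))); [|exfalso; auto].
      rewrite phi_invK; auto.
  - destruct hl as [rs [ns _]].
    destruct (excluded_middle_informative (H0 (a ** a1))) as [_|]; [|tauto].
    rewrite gmul_assoc, <- phi_gmul by assumption.
    destruct (excluded_middle_informative (K0 (phi (a ** a1) ** s))) as [h|h].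
    + exfalso. apply ns, (subgroup_gmul_cancel_l K0_sub (hK _ h01) h).
    + rewrite coset_rep_gmul, rs, <- gmul_assoc, gmul_Vr, gmul_1r, phi_invK; auto.
Qed.

Definition NF : Type := {p | normal_form p}.

Definition nf_act_H (h : H) (x : NF) : NF :=
  exist _ (act_H h (proj1_sig x)) (act_H_nf h _ (proj2_sig x)).
Definition nf_act_K (k : K) (x : NF) : NF :=
  exist _ (act_K k (proj1_sig x)) (act_K_nf k _ (proj2_sig x)).

Definition perm_H (h : H) : sym_group NF.
Proof.
  refine (Perm NF (nf_act_H h) (nf_act_H (ginv h)) _ _); intros [p np];
    apply sig_ext; simpl;
    rewrite <- act_H_gmul, ?gmul_Vr, ?gmul_Vl, act_H_gone; auto.
Defined.

Definition perm_K (k : K) : sym_group NF.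
Proof.
  refine (Perm NF (nf_act_K k) (nf_act_K (ginv k)) _ _); intros [p np];
    apply sig_ext; simpl;
    rewrite <- act_K_gmul, ?gmul_Vr, ?gmul_Vl, act_K_gone; auto.
Defined.

Lemma perm_H_hom : is_hom perm_H.
Proof.
  intros h1 h2. apply perm_ext. intros [p np].
  apply sig_ext; simpl; auto using act_H_gmul.
Qed.

Lemma perm_K_hom : is_hom perm_K.
Proof.
  intros k1 k2. apply perm_ext. intros [p np].
  apply sig_ext; simpl; auto using act_K_gmul.
Qed.

Lemma perm_H_K_agree a : H0 a -> perm_H a = perm_K (phi a).
Proof.
  intro ha. apply perm_ext. intros [p np].
  apply sig_ext; simpl; auto using act_H_K_agree.
Qed.

End NormalForms.

Arguments phi_inv_spec {H K H0 K0 phi} phi_iso y.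
Arguments phi_K0 {H K H0 K0 phi} phi_iso a.
Arguments phi_gone {H K H0 K0 phi} H0_sub phi_iso.

Section Amalgam.
Variables (H K : Group) (H0 : H -> Prop) (K0 : K -> Prop) (phi : H -> K)
  (G : Group) (iH : H -> G) (iK : K -> G).
Hypotheses (H0_sub : is_subgroup H0) (K0_sub : is_subgroup K0)
  (phi_iso : iso_between H0 K0 phi) (am : is_amalgam H0 K0 phi G iH iK).

Local Notation phi_inv := (phi_inv H K H0 phi).
Local Notation NF := (NF H K H0 K0).
Local Notation perm_H := (perm_H H K H0 K0 H0_sub).
Local Notation perm_K := (perm_K H K H0 K0 phi K0_sub phi_iso).
Local Notation act_H := (act_H H K H0).
Local Notation act_K := (act_K H K H0 K0 phi).
Local Notation head_side := (head_side H K).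

Lemma iH_hom : is_hom iH.
Proof. apply am. Qed.

Lemma iK_hom : is_hom iK.
Proof. apply am. Qed.

Lemma iH_iK_amalgam a : H0 a -> iH a = iK (phi a).
Proof. apply am. Qed.

Lemma iK_K0 b : K0 b -> iK b = iH (phi_inv b).
Proof.
  intro hb. destruct (phi_inv_spec phi_iso b hb) as [ha e].
  rewrite iH_iK_amalgam, e; auto.
Qed.

Inductive generated : G -> Prop :=
  | generated_one : generated gone
  | generated_H h g : generated g -> generated (iH h ** g)
  | generated_K k g : generated g -> generated (iK k ** g).

Lemma generated_gmul x y : generated x -> generated y -> generated (x ** y).
Proof.
  intros hx hy. induction hx.
  - rewrite gmul_1l. exact hy.
  - rewrite <- gmul_assoc. constructor. assumption.
  - rewrite <- gmul_assoc. constructor. assumption.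
Qed.

Lemma generated_iH h : generated (iH h).
Proof. rewrite <- gmul_1r. repeat constructor. Qed.

Lemma generated_iK k : generated (iK k).
Proof. rewrite <- gmul_1r. repeat constructor. Qed.

Lemma generated_subgroup : is_subgroup generated.
Proof.
  split; [constructor|split; [apply generated_gmul|]].
  intros x hx. induction hx.
  - rewrite ginv_gone. constructor.
  - rewrite ginv_gmul, <- (hom_ginv iH_hom).
    apply generated_gmul; [assumption|apply generated_iH].
  - rewrite ginv_gmul, <- (hom_ginv iK_hom).
    apply generated_gmul; [assumption|apply generated_iK].
Qed.

(* The universal property maps [G] into its generated subgroup; by uniqueness, following
   this map by the inclusion gives the identity. *)
Lemma amalgam_generated x : generated x.
Proof.
  set (GG := subgroup_group G generated generated_subgroup).
  set (f := fun h => (exist _ (iH h) (generated_iH h) : GG)).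
  set (g := fun k => (exist _ (iK k) (generated_iK k) : GG)).
  assert (hf : is_hom f)
    by (intros a b; apply sig_ext; simpl; apply iH_hom).
  assert (hg : is_hom g)
    by (intros a b; apply sig_ext; simpl; apply iK_hom).
  assert (hfg : forall h, H0 h -> f h = g (phi h))
    by (intros h hh; apply sig_ext; simpl; apply iH_iK_amalgam, hh).
  destruct am as [_ [_ [_ univ]]].
  destruct (univ GG f g hf hg hfg) as [u [u_hom [uH [uK _]]]].
  destruct (univ G iH iK iH_hom iK_hom iH_iK_amalgam) as [w [_ [_ [_ w_unique]]]].
  assert (E : proj1_sig (u x) = x).
  { rewrite (w_unique (fun y => proj1_sig (u y))), <- (w_unique (fun y => y)); auto.
    - intros a b. reflexivity.
    - intros a b. rewrite u_hom. reflexivity.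
    - intro h. rewrite uH. reflexivity.
    - intro k. rewrite uK. reflexivity. }
  rewrite <- E. apply proj2_sig.
Qed.

Inductive letter := LH (h : H) | LK (k : K).

Definition letter_val (x : letter) : G := match x with LH h => iH h | LK k => iK k end.

Definition letter_side (x : letter) : bool := match x with LH _ => true | LK _ => false end.

Definition outside_amalgam (x : letter) : Prop :=
  match x with LH h => ~ H0 h | LK k => ~ K0 k end.

Inductive reduced : bool -> bool -> nat -> G -> Prop :=
  | reduced_letter x :
      outside_amalgam x -> reduced (letter_side x) (letter_side x) 1 (letter_val x)
  | reduced_cons x e m g : outside_amalgam x -> reduced (negb (letter_side x)) e m g ->
      reduced (letter_side x) e (S m) (letter_val x ** g).

Lemma reduced_length_pos {t e m g} : reduced t e m g -> 1 <= m.
Proof. intro r; destruct r; lia. Qed.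

Lemma reduced_sides {t e m g} : reduced t e m g -> e = if Nat.odd m then t else negb t.
Proof.
  intro r. induction r as [x _|x e m g _ r IH]; [reflexivity|].
  rewrite IH, Nat.odd_succ, <- Nat.negb_odd.
  destruct (Nat.odd m), (letter_side x); reflexivity.
Qed.

Lemma reduced_length1 {t e g} :
  reduced t e 1 g -> e = t /\ exists x, outside_amalgam x /\ letter_side x = t /\ g = letter_val x.
Proof.
  intro r. split; [apply (reduced_sides r)|].
  inversion r as [x hx|x e' m g' hx r']; subst.
  - eauto.
  - apply reduced_length_pos in r'. lia.
Qed.

Lemma reduced_snoc t e m g y : reduced t e m g -> outside_amalgam y ->
  letter_side y = negb e -> reduced t (negb e) (S m) (g ** letter_val y).
Proof.
  intros r hy sy. induction r as [x hx|x e m g hx r IH].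
  - rewrite <- sy. apply reduced_cons; auto. rewrite <- sy. apply reduced_letter, hy.
  - rewrite <- gmul_assoc. apply reduced_cons; auto.
Qed.

Lemma reduced_app t e m g e' m' g' :
  reduced t e m g -> reduced (negb e) e' m' g' -> reduced t e' (m + m') (g ** g').
Proof.
  intros r1 r2. induction r1 as [x hx|x e m g hx r IH]; simpl.
  - apply reduced_cons; auto.
  - rewrite <- gmul_assoc. apply reduced_cons; auto.
Qed.

Lemma reduced_unsnoc {t e m g} : reduced t e m g -> 2 <= m ->
  exists g' y, g = g' ** letter_val y /\ outside_amalgam y /\ letter_side y = e /\
    reduced t (negb e) (m - 1) g'.
Proof.
  intro r. induction r as [x hx|x e m g hx r IH]; intro hm; [lia|].
  destruct (Nat.eq_dec m 1) as [->|ne].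
  - destruct (reduced_length1 r) as [-> [y [hy [sy ->]]]].
    exists (letter_val x), y. rewrite negb_involutive.
    repeat split; auto. apply reduced_letter, hx.
  - pose proof (reduced_length_pos r).
    destruct IH as [g'' [y [-> [hy [sy r']]]]]; [lia|].
    exists (letter_val x ** g''), y. rewrite gmul_assoc.
    replace (S m - 1) with (S (m - 1)) by lia.
    repeat split; auto. apply reduced_cons; auto.
Qed.

Definition letter_mul (x y : letter) : letter :=
  match x, y with
  | LH a, LH b => LH (a ** b)
  | LK a, LK b => LK (a ** b)
  | _, _ => x
  end.

Lemma letter_mul_val x y :
  letter_side x = letter_side y -> letter_val (letter_mul x y) = letter_val x ** letter_val y.
Proof.
  destruct x, y; simpl; intro e; try discriminate; [apply iH_hom|apply iK_hom].
Qed.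

Lemma letter_mul_side x y : letter_side (letter_mul x y) = letter_side x.
Proof. destruct x, y; reflexivity. Qed.

Lemma inside_amalgam {x} : ~ outside_amalgam x -> exists a, H0 a /\ letter_val x = iH a.
Proof.
  destruct x as [h|k]; simpl; intro n; apply NNPP in n.
  - eauto.
  - exists (phi_inv k). split; [apply (phi_inv_spec phi_iso)|apply iK_K0]; assumption.
Qed.

Lemma letter_mul_iH_r x a : H0 a -> exists x', letter_side x' = letter_side x /\
  letter_val x' = letter_val x ** iH a /\ (outside_amalgam x -> outside_amalgam x').
Proof.
  intro ha. destruct x as [h|k].
  - exists (LH (h ** a)). simpl. repeat split; [apply iH_hom|].
    intros n1 n2. apply n1, (subgroup_gmul_cancel_r H0_sub ha n2).
  - exists (LK (k ** phi a)). simpl. repeat split.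
    + rewrite iH_iK_amalgam; auto. apply iK_hom.
    + intros n1 n2. apply n1, (subgroup_gmul_cancel_r K0_sub (phi_K0 phi_iso a ha) n2).
Qed.

Lemma letter_mul_iH_l x a : H0 a -> exists x', letter_side x' = letter_side x /\
  letter_val x' = iH a ** letter_val x /\ (outside_amalgam x -> outside_amalgam x').
Proof.
  intro ha. destruct x as [h|k].
  - exists (LH (a ** h)). simpl. repeat split; [apply iH_hom|].
    intros n1 n2. apply n1, (subgroup_gmul_cancel_l H0_sub ha n2).
  - exists (LK (phi a ** k)). simpl. repeat split.
    + rewrite iH_iK_amalgam; auto. apply iK_hom.
    + intros n1 n2. apply n1, (subgroup_gmul_cancel_l K0_sub (phi_K0 phi_iso a ha) n2).
Qed.

Lemma reduced_gmul_iH_r a t e m g : H0 a -> reduced t e m g -> reduced t e m (g ** iH a).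
Proof.
  intros ha r. induction r as [x hx|x e m g hx r IH].
  - destruct (letter_mul_iH_r x a ha) as [x' [<- [<- hx']]]. apply reduced_letter; auto.
  - rewrite <- gmul_assoc. apply reduced_cons; auto.
Qed.

Lemma reduced_gmul_iH_l a t e m g : H0 a -> reduced t e m g -> reduced t e m (iH a ** g).
Proof.
  intros ha r. destruct r as [x hx|x e m g hx r];
    destruct (letter_mul_iH_l x a ha) as [x' [sx' [vx' hx']]].
  - rewrite <- vx', <- sx'. apply reduced_letter; auto.
  - rewrite gmul_assoc, <- vx', <- sx'. apply reduced_cons; auto. rewrite sx'. exact r.
Qed.

Definition letter_inv (x : letter) : letter :=
  match x with LH h => LH (ginv h) | LK k => LK (ginv k) end.

Lemma letter_inv_val x : letter_val (letter_inv x) = ginv (letter_val x).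
Proof. destruct x; simpl; [apply (hom_ginv iH_hom)|apply (hom_ginv iK_hom)]. Qed.

Lemma letter_inv_side x : letter_side (letter_inv x) = letter_side x.
Proof. destruct x; reflexivity. Qed.

Lemma letter_inv_outside x : outside_amalgam x -> outside_amalgam (letter_inv x).
Proof.
  destruct x; simpl; intros n1 n2; apply n1.
  - apply (subgroup_of_ginv H0_sub n2).
  - apply (subgroup_of_ginv K0_sub n2).
Qed.

Lemma reduced_conj s q g x : reduced s s q g -> outside_amalgam x -> letter_side x = negb s ->
  reduced (letter_side x) (letter_side x) (S (S q)) (letter_val x ** g ** ginv (letter_val x)).
Proof.
  intros r hx sx. rewrite <- letter_inv_val, <- gmul_assoc.
  apply reduced_cons; auto. rewrite sx, negb_involutive.
  apply reduced_snoc; auto using letter_inv_outside. rewrite letter_inv_side. exact sx.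
Qed.

Definition amalgam_normal (g : G) : Prop :=
  (exists a, H0 a /\ g = iH a) \/ exists t e m, reduced t e m g.

Lemma amalgam_normal_letter x g : amalgam_normal g -> amalgam_normal (letter_val x ** g).
Proof.
  assert (single : forall z, amalgam_normal (letter_val z)).
  { intro z. destruct (classic (outside_amalgam z)) as [hz|hz].
    - right. do 3 eexists. apply reduced_letter, hz.
    - left. apply inside_amalgam, hz. }
  intros [[a [ha ->]]|[t [e [m r]]]].
  - destruct (letter_mul_iH_r x a ha) as [x' [_ [<- _]]]. apply single.
  - destruct (bool_dec (letter_side x) t) as [sx|sx].
    + destruct r as [y hy|y e m g hy r].
      * rewrite <- letter_mul_val by assumption. apply single.
      * rewrite gmul_assoc, <- letter_mul_val by assumption.
        right. destruct (classic (outside_amalgam (letter_mul x y))) as [hz|hz].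
        -- do 3 eexists. apply reduced_cons; [exact hz|]. rewrite letter_mul_side, sx. exact r.
        -- destruct (inside_amalgam hz) as [b [hb ->]].
           do 3 eexists. apply reduced_gmul_iH_l; eauto.
    + right. destruct (classic (outside_amalgam x)) as [hx|hx].
      * do 3 eexists. apply reduced_cons; [exact hx|].
        replace (negb (letter_side x)) with t; [exact r|].
        destruct t, (letter_side x); simpl in *; congruence.
      * destruct (inside_amalgam hx) as [b [hb ->]].
        do 3 eexists. apply reduced_gmul_iH_l; eauto.
Qed.

Lemma amalgam_normal_all g : amalgam_normal g.
Proof.
  induction (amalgam_generated g) as [|h g _ IH|k g _ IH].
  - left. exists gone. split; [apply subgroup_gone, H0_sub|].
    symmetry. apply (hom_gone iH_hom).
  - exact (amalgam_normal_letter (LH h) g IH).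
  - exact (amalgam_normal_letter (LK k) g IH).
Qed.

Section WordLength.
Variable u : G -> sym_group NF.
Hypotheses (u_hom : is_hom u) (u_H : forall h, u (iH h) = perm_H h)
  (u_K : forall k, u (iK k) = perm_K k).

Definition nf_base : NF := exist _ (gone, nil) (Logic.conj (subgroup_gone H0_sub) I).

Definition nf_of (g : G) : H * list (H + K) := proj1_sig (perm_fun (u g) nf_base).

Lemma nf_of_gone : nf_of gone = (gone, nil).
Proof. unfold nf_of. rewrite (hom_gone u_hom). reflexivity. Qed.

Lemma nf_of_iH h g : nf_of (iH h ** g) = act_H h (nf_of g).
Proof. unfold nf_of. rewrite u_hom, u_H. reflexivity. Qed.

Lemma nf_of_iK k g : nf_of (iK k ** g) = act_K k (nf_of g).
Proof. unfold nf_of. rewrite u_hom, u_K. reflexivity. Qed.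

Lemma nf_of_letter x g : outside_amalgam x ->
  head_side (snd (nf_of g)) <> Some (letter_side x) ->
  length (snd (nf_of (letter_val x ** g))) = S (length (snd (nf_of g))) /\
  head_side (snd (nf_of (letter_val x ** g))) = Some (letter_side x).
Proof.
  intros hx sg. assert (nf : normal_form H K H0 K0 (nf_of g)) by (unfold nf_of; apply proj2_sig).
  destruct (nf_of g) as [a l] eqn:E. destruct nf as [ha _]. simpl in ha, sg.
  destruct x as [h|k]; simpl in *.
  - rewrite nf_of_iH, E. unfold act_H, H_head, H_rest, H_split.
    assert (c : ~ H0 (h ** a)) by (intro c; apply hx, (subgroup_gmul_cancel_r H0_sub ha c)).
    destruct l as [|[s|s] t]; simpl in *; try congruence;
      destruct (excluded_middle_informative (H0 (h ** a))); tauto.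
  - rewrite nf_of_iK, E. unfold act_K, K_head, K_rest, K_split.
    assert (c : ~ K0 (k ** phi a)).
    { intro c. apply hx, (subgroup_gmul_cancel_r K0_sub (phi_K0 phi_iso a ha) c). }
    destruct l as [|[s|s] t]; simpl in *; try congruence;
      destruct (excluded_middle_informative (K0 (k ** phi a))); tauto.
Qed.

Lemma reduced_nf_of {t e m g} : reduced t e m g ->
  length (snd (nf_of g)) = m /\ head_side (snd (nf_of g)) = Some t.
Proof.
  intro r. induction r as [x hx|x e m g hx r [IH1 IH2]].
  - rewrite <- (gmul_1r G (letter_val x)).
    destruct (nf_of_letter x gone hx) as [-> ->]; rewrite nf_of_gone; simpl; auto; discriminate.
  - destruct (nf_of_letter x g hx) as [-> ->].
    + rewrite IH2. destruct (letter_side x); discriminate.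
    + rewrite IH1. auto.
Qed.

Lemma reduced_iH_nf_of {t e m h} : reduced t e m (iH h) -> m = 1 /\ t = true.
Proof.
  intro r. destruct (reduced_nf_of r) as [hl hs].
  pose proof (reduced_length_pos r).
  rewrite <- (gmul_1r G (iH h)), nf_of_iH, nf_of_gone in hl, hs.
  unfold act_H, H_head, H_rest, H_split in hl, hs. simpl in hl, hs.
  destruct (excluded_middle_informative (H0 (h ** gone))); simpl in hl, hs.
  - lia.
  - split; [lia|congruence].
Qed.

End WordLength.

Lemma reduced_iH {t e m h} : reduced t e m (iH h) -> m = 1 /\ t = true.
Proof.
  destruct am as [_ [_ [_ univ]]].
  destruct (univ _ perm_H perm_K (perm_H_hom H K H0 K0 H0_sub)
              (perm_K_hom H K H0 K0 phi K0_sub phi_iso)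
              (perm_H_K_agree H K H0 K0 phi H0_sub K0_sub phi_iso))
    as [u [u_hom [u_H [u_K _]]]].
  apply (reduced_iH_nf_of u u_hom u_H u_K).
Qed.

Lemma reduced_uncons {t e m g} : reduced t e m g -> 2 <= m ->
  exists x g', g = letter_val x ** g' /\ outside_amalgam x /\ letter_side x = t /\
    reduced (negb t) e (m - 1) g'.
Proof.
  intros r hm. destruct r as [x hx|x e m g hx r]; [lia|].
  exists x, g. replace (S m - 1) with m by lia. auto.
Qed.

Lemma reduced_same_sides_odd {t m g} : reduced t t m g -> Nat.odd m = true.
Proof. intro r. apply reduced_sides in r. destruct (Nat.odd m), t; easy. Qed.

Lemma reduced_ends {t m g} : reduced t t m g -> 2 <= m ->
  exists x y Q q, g = letter_val x ** Q ** letter_val y /\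
    outside_amalgam x /\ outside_amalgam y /\ letter_side x = t /\ letter_side y = t /\
    reduced (negb t) (negb t) q Q /\ m = S (S q).
Proof.
  intros r hm. destruct (reduced_uncons r hm) as [x [g' [-> [hx [sx r']]]]].
  assert (m <> 2) by (intros ->; discriminate (reduced_same_sides_odd r)).
  destruct (reduced_unsnoc r') as [Q [y [-> [hy [sy rQ]]]]]; [lia|].
  exists x, y, Q, (m - 1 - 1). rewrite gmul_assoc.
  repeat split; auto. lia.
Qed.

Lemma reduced_gpow_app t m p e m' r : reduced t (negb t) m p -> reduced t e m' r ->
  forall j, reduced t e (j * m + m') (gpow p j ** r).
Proof.
  intros rp rr j. induction j as [|j IH]; simpl.
  - rewrite gmul_1l. exact rr.
  - rewrite <- gmul_assoc, <- Nat.add_assoc. apply (reduced_app _ _ _ _ _ _ _ rp).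
    rewrite negb_involutive. exact IH.
Qed.

Lemma reduced_gpow_cyclic {t m g n} : reduced t (negb t) m g -> 1 <= n ->
  reduced t (negb t) (n * m) (gpow g n).
Proof.
  intros r hn. destruct n as [|k]; [lia|].
  replace (S k * m) with (k * m + m) by lia. rewrite gpow_succ_r.
  apply reduced_gpow_app; assumption.
Qed.

(* The case is decided by whether the last letter times the first lies in the amalgam. *)
Lemma reduced_cyclic_dichotomy {t m g} : reduced t t m g -> 2 <= m ->
  (forall n, 1 <= n -> exists m', 3 <= m' /\ reduced t t m' (gpow g n)) \/
  exists x N q, outside_amalgam x /\ letter_side x = t /\ reduced (negb t) (negb t) q N /\
    m = S (S q) /\ g = letter_val x ** N ** ginv (letter_val x).
Proof.
  intros r hm.
  destruct (reduced_ends r hm) as [x [y [Q [q [-> [hx [hy [sx [sy [rQ ->]]]]]]]]]].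
  pose proof (reduced_length_pos rQ).
  destruct (classic (outside_amalgam (letter_mul y x))) as [hyx|hyx].
  - left. intros [|k] hn; [lia|].
    assert (rQy : reduced (negb t) t (S q) (Q ** letter_val y)).
    { rewrite <- (negb_involutive t) at 2. apply reduced_snoc; auto.
      rewrite negb_involutive. exact sy. }
    assert (rQyx : reduced (negb t) (negb (negb t)) (S q) (Q ** letter_val y ** letter_val x)).
    { rewrite <- gmul_assoc, <- letter_mul_val by congruence.
      apply reduced_snoc; auto. rewrite letter_mul_side, negb_involutive. exact sy. }
    exists (S (k * S q + S q)). split; [lia|].
    rewrite <- gmul_assoc, gpow_rotate, <- sx at 1.
    apply reduced_cons; auto. rewrite sx. apply reduced_gpow_app; assumption.
  - right. destruct (inside_amalgam hyx) as [a [ha ea]].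
    rewrite letter_mul_val in ea by congruence.
    exists x, (Q ** iH a), q. repeat split; auto using reduced_gmul_iH_r.
    assert (ey : letter_val y = iH a ** ginv (letter_val x)).
    { rewrite <- ea, <- gmul_assoc, gmul_Vr, gmul_1r. reflexivity. }
    rewrite ey, !gmul_assoc. reflexivity.
Qed.

Hypotheses (H_tf : torsion_free H) (K_tf : torsion_free K) (H0_mal : malnormal H0).

Lemma reduced_iH_conj_iK_gpow h k n : ~ H0 h -> ~ K0 k -> 1 <= n ->
  exists m, reduced true true m (iH h ** iK (gpow k n) ** ginv (iH h)).
Proof.
  intros nh nk hn. destruct (classic (K0 (gpow k n))) as [c|c].
  - destruct (phi_inv_spec phi_iso _ c) as [hb eb].
    rewrite iK_K0, <- (hom_ginv iH_hom), <- !iH_hom by exact c.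
    exists 1. apply (reduced_letter (LH _)), (malnormal_conj_notin H0_sub H0_mal); auto.
    intro b1. rewrite b1, (phi_gone H0_sub phi_iso) in eb.
    apply nk. rewrite (K_tf k n hn (eq_sym eb)). apply subgroup_gone, K0_sub.
  - exists 3. apply (reduced_conj false 1 _ (LH h)); [apply (reduced_letter (LK _))|..]; auto.
Qed.

(* Mutual induction on the length: conjugating by a first letter of [H] moves between the
   two statements, and malnormality with torsion-freeness handles the words of length one. *)
Lemma reduced_gpow m :
  (forall g, reduced true true m g -> forall n, 1 <= n ->
     exists m', reduced true true m' (gpow g n)) /\
  (forall g, reduced false false m g -> 3 <= m -> forall n, 1 <= n ->
     exists m', 3 <= m' /\ reduced false false m' (gpow g n)).
Proof.
  induction m as [m IH] using (well_founded_induction lt_wf). split.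
  - intros g r n hn. destruct (Nat.eq_dec m 1) as [->|ne].
    + destruct (reduced_length1 r) as [_ [[h|k] [hx [sx ->]]]]; [|discriminate].
      simpl. rewrite <- (hom_gpow iH_hom).
      exists 1. apply (reduced_letter (LH _)), malnormal_gpow_notin; auto.
    + pose proof (reduced_length_pos r).
      destruct (reduced_cyclic_dichotomy r) as [long|[x [N [q [hx [sx [rN [-> ->]]]]]]]];
        [lia| |].
      * destruct (long n hn) as [m' [_ r']]. eauto.
      * destruct x as [h1|k1]; [|discriminate]. rewrite gpow_conj.
        destruct (Nat.eq_dec q 1) as [->|nq].
        -- destruct (reduced_length1 rN) as [_ [[h|k] [hz [sz ->]]]]; [discriminate|].
           simpl. rewrite <- (hom_gpow iK_hom). apply reduced_iH_conj_iK_gpow; auto.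
        -- assert (q <> 2) by (intros ->; discriminate (reduced_same_sides_odd rN)).
           pose proof (reduced_length_pos rN).
           destruct (proj2 (IH q ltac:(lia)) N rN ltac:(lia) n hn) as [m' [_ r']].
           exists (S (S m')). apply (reduced_conj false _ _ (LH h1)); auto.
  - intros g r hm n hn.
    destruct (reduced_cyclic_dichotomy r) as [long|[x [N [q [hx [sx [rN [-> ->]]]]]]]];
      [lia|exact (long n hn)|].
    rewrite gpow_conj.
    destruct (proj1 (IH q ltac:(lia)) N rN n hn) as [m' r'].
    pose proof (reduced_length_pos r').
    exists (S (S m')). split; [lia|].
    rewrite <- sx. apply (reduced_conj true); auto.
Qed.

Lemma reduced_HH_gpow_iH m g n h0 : reduced true true m g -> 1 <= n -> gpow g n = iH h0 ->
  (exists h, g = iH h) \/ exists h k, g = iH h ** iK k ** ginv (iH h).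
Proof.
  intros r hn e0. destruct (Nat.eq_dec m 1) as [->|ne].
  - destruct (reduced_length1 r) as [_ [[h|k] [_ [sx ->]]]]; [|discriminate].
    left. exists h. reflexivity.
  - pose proof (reduced_length_pos r).
    destruct (reduced_cyclic_dichotomy r) as [long|[x [N [q [hx [sx [rN [-> ->]]]]]]]];
      [lia| |].
    + exfalso. destruct (long n hn) as [m' [hm' r']]. rewrite e0 in r'.
      destruct (reduced_iH r'). lia.
    + destruct x as [h1|k1]; [|discriminate].
      destruct (Nat.eq_dec q 1) as [->|nq].
      * destruct (reduced_length1 rN) as [_ [[h|k] [_ [sz ->]]]]; [discriminate|].
        right. exists h1, k. reflexivity.
      * exfalso.
        assert (q <> 2) by (intros ->; discriminate (reduced_same_sides_odd rN)).
        pose proof (reduced_length_pos rN).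
        destruct (proj2 (reduced_gpow q) N rN ltac:(lia) n hn) as [m' [_ r']].
        pose proof (reduced_conj false _ _ (LH h1) r' hx eq_refl) as rc.
        rewrite gpow_conj in e0. rewrite e0 in rc.
        destruct (reduced_iH rc). lia.
Qed.

Lemma gpow_iH_shape g n : 1 <= n -> (exists h0, iH h0 = gpow g n) ->
  (exists h, g = iH h) \/ exists h k, g = iH h ** iK k ** ginv (iH h).
Proof.
  intros hn [h0 e0]. symmetry in e0.
  destruct (amalgam_normal_all g) as [[a [_ ->]]|[t [e [m r]]]]; [eauto|].
  destruct (bool_dec e t) as [<-|ne].
  - destruct e.
    + exact (reduced_HH_gpow_iH _ _ _ _ r hn e0).
    + destruct (Nat.eq_dec m 1) as [->|nm].
      * destruct (reduced_length1 r) as [_ [[h|k] [_ [sx ->]]]]; [discriminate|].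
        right. exists gone, k. simpl.
        rewrite (hom_gone iH_hom), ginv_gone, gmul_1l, gmul_1r. reflexivity.
      * exfalso. pose proof (reduced_length_pos r).
        assert (m <> 2) by (intros ->; discriminate (reduced_same_sides_odd r)).
        destruct (proj2 (reduced_gpow m) g r ltac:(lia) n hn) as [m' [_ r']].
        rewrite e0 in r'. destruct (reduced_iH r'). discriminate.
  - exfalso. replace e with (negb t) in r by (destruct e, t; simpl; congruence).
    pose proof (reduced_gpow_cyclic r hn) as r'. rewrite e0 in r'.
    destruct (reduced_iH r') as [hnm _].
    assert (m = 1) by nia. subst m.
    destruct (reduced_length1 r) as [c _]. destruct t; discriminate.
Qed.

Local Notation in_iH := (fun x : G => exists h : H, iH h = x).

Lemma iK_gpow_in_iH k j : in_iH (gpow (iK k) j) <-> K0 (gpow k j).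
Proof.
  rewrite <- (hom_gpow iK_hom). split.
  - intros [h e]. apply NNPP. intro c.
    pose proof (reduced_letter (LK (gpow k j)) c) as r. simpl in r. rewrite <- e in r.
    destruct (reduced_iH r). discriminate.
  - intro c. exists (phi_inv (gpow k j)). symmetry. apply iK_K0, c.
Qed.

Lemma iH_conj_in_iH h y : in_iH (iH h ** y ** ginv (iH h)) <-> in_iH y.
Proof.
  rewrite <- (hom_ginv iH_hom). split.
  - intros [z e]. exists (ginv h ** z ** h). rewrite !iH_hom, e, (hom_ginv iH_hom).
    rewrite !gmul_assoc, gmul_Vl, gmul_1l, <- gmul_assoc, gmul_Vl, gmul_1r. reflexivity.
  - intros [z <-]. exists (h ** z ** ginv h). rewrite !iH_hom. reflexivity.
Qed.

Lemma OrdSet_in_iH_pos n : 1 <= n -> OrdSet in_iH n -> OrdSet K0 n.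
Proof.
  intros hn [g hord]. pose proof hord as [[_ [hg hmin]]|[-> _]]; [|lia].
  destruct (gpow_iH_shape g n hn hg) as [[h ->]|[h [k ->]]].
  - destruct (Nat.eq_dec n 1) as [->|ne].
    + exists gone. left. rewrite gpow_1.
      split; [lia|split; [apply subgroup_gone, K0_sub|intros; lia]].
    + exfalso. apply (hmin 1); [lia|lia|]. exists h. rewrite gpow_1. reflexivity.
  - exists k. refine (OrdRel_transfer G K in_iH K0 _ k n _ hord).
    intro j. rewrite gpow_conj, iH_conj_in_iH. apply iK_gpow_in_iH.
Qed.

Lemma OrdSet_K0_in_iH n : OrdSet K0 n -> OrdSet in_iH n.
Proof.
  intros [k hk]. exists (iK k). refine (OrdRel_transfer K G K0 in_iH k _ n _ hk).
  intro j. symmetry. apply iK_gpow_in_iH.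
Qed.

(* A cyclically reduced word of length two has no power in [iH H]. *)
Lemma OrdSet_in_iH_0 : proper H0 -> proper K0 -> OrdSet in_iH 0.
Proof.
  intros [h nh] [k nk]. exists (iH h ** iK k). right. split; [reflexivity|].
  intros j hj [h' e].
  assert (r : reduced true (negb true) 2 (iH h ** iK k)).
  { apply (reduced_cons (LH h)); [exact nh|]. apply (reduced_letter (LK k)), nk. }
  pose proof (reduced_gpow_cyclic r hj) as r'. rewrite <- e in r'.
  destruct (reduced_iH r'). lia.
Qed.

End Amalgam.

Theorem proposition4p1 (H K : Group) (H0 : H -> Prop) (K0 : K -> Prop) (phi : H -> K)
  (G : Group) (iH : H -> G) (iK : K -> G) :
  torsion_free H -> torsion_free K ->
  is_subgroup H0 -> proper H0 -> malnormal H0 ->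
  is_subgroup K0 -> proper K0 ->
  iso_between H0 K0 phi ->
  is_amalgam H0 K0 phi G iH iK ->
  forall n : nat, OrdSet (fun x : G => exists h : H, iH h = x) n <-> (OrdSet K0 n \/ n = 0).
Proof.
  intros H_tf K_tf H0_sub H0_proper H0_mal K0_sub K0_proper phi_iso am n. split.
  - intro hn. destruct n as [|n]; [right; reflexivity|left].
    apply (OrdSet_in_iH_pos H K H0 K0 phi G iH iK H0_sub K0_sub phi_iso am H_tf K_tf H0_mal);
      [lia|exact hn].
  - intros [hK| ->].
    + exact (OrdSet_K0_in_iH H K H0 K0 phi G iH iK H0_sub K0_sub phi_iso am n hK).
    + exact (OrdSet_in_iH_0 H K H0 K0 phi G iH iK H0_sub K0_sub phi_iso am H0_proper K0_proper).
Qed.
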